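(* Let $p \neq 2$ be a prime and let $E_T$ be the elliptic curve over $\mathbf{F}_p(T)$ given by $y^2 = x^3 + T x^2 - T^3 x$. The point $Q = (-T, T^2) \in E_T(\mathbf{F}_p(T))$ has infinite order. In particular, for any field $L$ of characteristic $p$ and any $t \in L$ transcendental over $\mathbf{F}_p$, the point $Q_t = (-t, t^2)$ on the elliptic curve $E_t : y^2 = x^3 + t x^2 - t^3 x$ over $L$ (obtained via the embedding $\mathbf{F}_p(T) \to L$, $T \mapsto t$) has infinite order in $E_t(L)$. *)

From HB Require Import structures.
From mathcomp Require Import all_boot all_order all_algebra.
From mathcomp Require Import fraction.
Set Implicit Arguments. Unset Strict Implicit. Unset Printing Implicit Defensive.
Import Order.TTheory GRing.Theory Num.Theory.
Local Open Scope ring_scope.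

(* Points of the Weierstrass curve  y^2 = x^3 + a2 x^2 + a4 x  over a field K:
   None is the point at infinity O, Some (x, y) an affine point. *)
Definition ec_point (K : fieldType) := option (K * K).

Definition on_curve (K : fieldType) (a2 a4 : K) (P : ec_point K) : Prop :=
  match P with
  | None => True
  | Some (x, y) => y ^+ 2 = x ^+ 3 + a2 * x ^+ 2 + a4 * x
  end.

Definition ec_add (K : fieldType) (a2 a4 : K) (P Q : ec_point K) : ec_point K :=
  match P, Q with
  | None, _ => Q
  | _, None => P
  | Some (x1, y1), Some (x2, y2) =>
    if x1 == x2 then
      if y1 + y2 == 0 then None
      else
        let l := (3%:R * x1 ^+ 2 + 2%:R * a2 * x1 + a4) / (2%:R * y1) in
        let x3 := l ^+ 2 - a2 - x1 - x2 in
        Some (x3, - (y1 + l * (x3 - x1)))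
    else
      let l := (y2 - y1) / (x2 - x1) in
      let x3 := l ^+ 2 - a2 - x1 - x2 in
      Some (x3, - (y1 + l * (x3 - x1)))
  end.

Definition ec_mul (K : fieldType) (a2 a4 : K) (n : nat) (P : ec_point K) :=
  iter n (ec_add a2 a4 P) None.

Definition infinite_order (K : fieldType) (a2 a4 : K) (P : ec_point K) : Prop :=
  forall n : nat, (0 < n)%N -> ec_mul a2 a4 n P <> None.

Definition FpT (p : nat) := {fraction {poly 'F_p}}.
Definition varT (p : nat) : FpT p := @FracField.tofrac _ ('X : {poly 'F_p}).

(* The prime-field embedding F_p -> L (for L of characteristic p). *)
Definition Fp_to (p : nat) (L : fieldType) (c : 'F_p) : L := (nat_of_ord c)%:R.

Definition transcendental_Fp (p : nat) (L : fieldType) (t : L) : Prop :=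
  forall q : {poly 'F_p}, q != 0 -> (map_poly (@Fp_to p L) q).[t] != 0.

(* Write T = u (1 + u) over F_p(u).  Then 1 + 4 T = (1 + 2 u)^2, so the cubic
   x^3 + T x^2 - T^3 x has the roots 0, T u and -T (1 + u), and a 2-descent is
   available: for a root e, (x - e) modulo squares is multiplicative along the
   three points of a line.  Hence x([n]Q) - e is (-T - e)^n up to a square as
   long as [n]Q stays off the x-axis.  Let m be the first index for which [m]Q
   is O or lies on the x-axis.  If [m]Q = O with m even, then [m/2]Q = -[m/2]Q
   lies on the x-axis, contradicting minimality; in the remaining cases the
   square classes make one of +-(1 + u), -u, +-u (1 + u) a square in F_p(u),
   which is impossible since each of them has a simple root.  Finally
   T |-> u^2 + u embeds F_p(T) into F_p(u), and T |-> t embeds it into L;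
   field embeddings preserve infinite order. *)

From HB Require Import structures.
From mathcomp Require Import all_boot all_order all_algebra.
From mathcomp Require Import fraction ring zify.
Import GRing.Theory.
Local Open Scope ring_scope.

Local Notation "x %:F" := (FracField.tofrac x).

Definition square {K : fieldType} (x : K) := exists w : K, x = w ^+ 2.

Section Squares.
Context {K : fieldType}.
Implicit Types x y z c w : K.

Lemma square_scale {x w} : w != 0 -> square (x * w ^+ 2) -> square x.
Proof. by move=> w0 [s e]; exists (s / w); rewrite expr_div_n -e mulfK ?expf_neq0. Qed.

Lemma nonsquare_neq0 {x} : ~ square x -> x != 0.
Proof. by apply: contra_not_neq => ->; exists 0; rewrite expr0n. Qed.

Lemma nonsquare_scale {x w y} : ~ square x -> w != 0 -> y = x * w ^+ 2 -> ~ square y.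
Proof. by move=> nsq w0 -> /(square_scale w0). Qed.

Lemma square_trans {x y z} : z != 0 -> square (x * z) -> square (z * y) -> square (x * y).
Proof.
move=> z0 [s1 e1] [s2 e2]; apply: (square_scale z0); exists (s1 * s2).
by rewrite exprMn -e1 -e2; ring.
Qed.

Lemma square_odd {x c n} : c != 0 -> square (x * c ^+ n) -> square (x * c ^+ odd n).
Proof.
move=> c0; rewrite -[in X in square X](odd_double_half n) exprD -muln2 exprM mulrA.
exact/square_scale/expf_neq0.
Qed.
End Squares.

Definition ec_cubic {K : fieldType} (a b z : K) := z ^+ 3 + a * z ^+ 2 + b * z.
Definition ec_dcubic {K : fieldType} (a b z : K) := 3 * z ^+ 2 + 2 * a * z + b.

Definition ec_nonsingular {K : fieldType} (a b : K) :=
  forall z, ec_cubic a b z = 0 -> ec_dcubic a b z != 0.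

Definition ec_neg {K : fieldType} (P : ec_point K) : ec_point K :=
  if P is Some (x, y) then Some (x, - y) else None.

(* The line y = l x + n meets the curve at the abscissae x1, x2, x3, counted
   with multiplicity: Vieta's relations for ec_cubic a b z - (l z + n)^2. *)
Definition ec_line {K : fieldType} (a b l n x1 x2 x3 : K) : Prop :=
  [/\ x1 + x2 + x3 = l ^+ 2 - a, x1 * x2 + x1 * x3 + x2 * x3 = b - 2 * l * n
    & x1 * x2 * x3 = n ^+ 2].

Section WeierstrassCurve.
Context {K : fieldType} {a b : K}.
Hypothesis two_neq0 : (2 : K) != 0.
Local Notation cubic := (ec_cubic a b).
Local Notation add := (ec_add a b).
Local Notation mul := (ec_mul a b).

Lemma ec_lineE {l n x1 x2 x3} : ec_line a b l n x1 x2 x3 ->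
  forall z, cubic z - (l * z + n) ^+ 2 = (z - x1) * (z - x2) * (z - x3).
Proof.
case=> s1 s2 s3 z; apply/subr0_eq.
have -> : a = l ^+ 2 - (x1 + x2 + x3) by rewrite s1; ring.
have -> : b = x1 * x2 + x1 * x3 + x2 * x3 + 2 * l * n by rewrite s2; ring.
rewrite -[RHS](subrr (n ^+ 2)) -{1}s3 /ec_cubic; ring.
Qed.

Lemma ec_line_chord l n x1 x2 : x1 != x2 ->
  (l * x1 + n) ^+ 2 = cubic x1 -> (l * x2 + n) ^+ 2 = cubic x2 ->
  ec_line a b l n x1 x2 (l ^+ 2 - a - x1 - x2).
Proof.
move=> x12 c1 c2; set x3 := _ - x2.
pose A := b - 2 * l * n - (x1 * x2 + x1 * x3 + x2 * x3).
pose B := x1 * x2 * x3 - n ^+ 2.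
have lin z : cubic z - (l * z + n) ^+ 2 - (z - x1) * (z - x2) * (z - x3) = A * z + B.
  by rewrite /ec_cubic /A /B /x3; ring.
have root1 : A * x1 + B = 0 by rewrite -lin -c1; ring.
have root2 : A * x2 + B = 0 by rewrite -lin -c2; ring.
have A0 : A = 0.
  apply: (@mulIf _ (x1 - x2)); first by rewrite subr_eq0.
  rewrite mul0r; transitivity ((A * x1 + B) - (A * x2 + B)); first ring.
  by rewrite root1 root2 subrr.
have B0 : B = 0 by rewrite -root1 A0 mul0r add0r.
by split; [rewrite /x3; ring | apply/esym/subr0_eq/A0 | apply/subr0_eq/B0].
Qed.

Lemma ec_line_tangent l n x1 :
  (l * x1 + n) ^+ 2 = cubic x1 -> 2 * l * (l * x1 + n) = ec_dcubic a b x1 ->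
  ec_line a b l n x1 x1 (l ^+ 2 - a - x1 - x1).
Proof.
move=> c1 d1; split.
- by ring.
- apply/subr0_eq; transitivity (2 * l * (l * x1 + n) - ec_dcubic a b x1).
    by rewrite /ec_dcubic; ring.
  by rewrite d1 subrr.
- apply/subr0_eq; transitivity
    (x1 * (2 * l * (l * x1 + n) - ec_dcubic a b x1) - ((l * x1 + n) ^+ 2 - cubic x1)).
    by rewrite /ec_dcubic /ec_cubic; ring.
  by rewrite d1 c1 !subrr mulr0 subrr.
Qed.

Lemma ec_add_line {x1 y1 x2 y2 x3 y3} :
  y1 ^+ 2 = cubic x1 -> y2 ^+ 2 = cubic x2 ->
  add (Some (x1, y1)) (Some (x2, y2)) = Some (x3, y3) ->
  exists l n, [/\ y1 = l * x1 + n, y2 = l * x2 + n, y3 = - (l * x3 + n)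
                & ec_line a b l n x1 x2 x3].
Proof.
move=> c1 c2; rewrite /ec_add.
have [x12|x12] := eqVneq x1 x2; last first.
  case=> <- <-; set l := _ / _; exists l, (y1 - l * x1).
  have y2E : y2 = l * x2 + (y1 - l * x1).
    by rewrite /l; field; rewrite subr_eq0 eq_sym.
  have y1E : y1 = l * x1 + (y1 - l * x1) by rewrite addrC subrK.
  split=> //; first by ring.
  by apply: ec_line_chord; rewrite -?y1E -?y2E.
subst x2; case: eqP => // /eqP y12 [<- <-]; set l := _ / _.
have y21 : y2 = y1.
  have /eqP : (y2 - y1) * (y2 + y1) = 0 by rewrite -subr_sqr c1 c2 subrr.
  by rewrite mulf_eq0 [y2 + y1]addrC (negPf y12) orbF subr_eq0 => /eqP.
have y1_neq0 : y1 != 0 by apply: contraNneq y12 => y0; rewrite y21 y0 addr0.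
exists l, (y1 - l * x1).
have y1E : y1 = l * x1 + (y1 - l * x1) by rewrite addrC subrK.
split; rewrite -?y1E ?y21 //; first by ring.
apply: ec_line_tangent; rewrite -y1E // /l /ec_dcubic.
by field; rewrite y1_neq0 two_neq0.
Qed.

Lemma on_curve_ec_add P R :
  on_curve a b P -> on_curve a b R -> on_curve a b (add P R).
Proof.
case: P R => [[x1 y1]|] [[x2 y2]|] // c1 c2.
case E: (add _ _) => [[x3 y3]|] //=.
have [l [n [_ _ -> /ec_lineE/(_ x3)]]] := ec_add_line c1 c2 E.
by rewrite subrr mulr0 sqrrN => /subr0_eq <-.
Qed.

Lemma ec_mul1 P : mul 1 P = P.
Proof. by case: P => [[]|]. Qed.

Lemma ec_mulS n P : mul n.+1 P = add P (mul n P).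
Proof. by []. Qed.

Lemma on_curve_ec_mul n {P} : on_curve a b P -> on_curve a b (mul n P).
Proof. by move=> cP; elim: n => //= n; apply: on_curve_ec_add. Qed.

Lemma ec_add_descent e {x1 y1 x2 y2 x3 y3} : cubic e = 0 ->
  y1 ^+ 2 = cubic x1 -> y2 ^+ 2 = cubic x2 ->
  add (Some (x1, y1)) (Some (x2, y2)) = Some (x3, y3) ->
  square ((x1 - e) * (x2 - e) * (x3 - e)).
Proof.
move=> e0 c1 c2 /(ec_add_line c1 c2) [l [n [_ _ _ /ec_lineE/(_ e)]]].
rewrite e0 sub0r => lineE; exists (l * e + n).
by rewrite -[_ ^+ 2]opprK lineE; ring.
Qed.

Lemma ec_negD P R : ec_neg (add P R) = add (ec_neg P) (ec_neg R).
Proof.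
case: P R => [[x1 y1]|] [[x2 y2]|] //; rewrite /ec_add /=.
case: eqP => _ /=; last by congr Some; congr pair; ring.
rewrite -opprD oppr_eq0; case: eqP => //= _.
by rewrite mulrN invrN; congr Some; congr pair; ring.
Qed.

Lemma ec_add_of_line l n x1 x2 x3 : ec_nonsingular a b -> ec_line a b l n x1 x2 x3 ->
  add (Some (x1, - (l * x1 + n))) (Some (x3, - (l * x3 + n))) = Some (x2, l * x2 + n).
Proof.
move=> ns line; have [s1 s2 _] := line.
have aE : a = l ^+ 2 - (x1 + x2 + x3) by rewrite s1; ring.
rewrite /ec_add; have [x13|x13] := eqVneq x1 x3; last first.
  have -> : (- (l * x3 + n) - - (l * x1 + n)) / (x3 - x1) = - l.
    by field; rewrite subr_eq0 eq_sym.
  by congr Some; congr pair; rewrite aE; ring.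
subst x3; have bE : b = x1 * x2 + x1 * x1 + x2 * x1 + 2 * l * n by rewrite s2; ring.
have dE : ec_dcubic a b x1 = 2 * l * (l * x1 + n) by rewrite /ec_dcubic aE bE; ring.
have y1_neq0 : l * x1 + n != 0.
  apply/eqP => y0; suff /ns : ec_cubic a b x1 = 0 by rewrite dE y0 mulr0 eqxx.
  by have := ec_lineE line x1; rewrite subrr mulr0 y0 expr0n subr0.
rewrite -opprD oppr_eq0 -mulr2n -[(l * x1 + n) *+ 2]mulr_natr mulf_eq0.
rewrite (negPf two_neq0) (negPf y1_neq0) /=.
have -> : ec_dcubic a b x1 / (2 * - (l * x1 + n)) = - l.
  by rewrite dE; field; rewrite oppr_eq0 y1_neq0 two_neq0.
by congr Some; congr pair; rewrite aE; ring.
Qed.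

Lemma ec_addKr {P R} : ec_nonsingular a b -> on_curve a b P -> on_curve a b R ->
  add (ec_neg P) (add P R) = R.
Proof.
case: P => [[x1 y1]|] // ns c1; case: R => [[x2 y2]|] c2; last first.
  by rewrite /ec_add /= eqxx addNr eqxx.
case E: (add (Some (x1, y1)) _) => [[x3 y3]|].
  have [l [n [-> -> -> line]]] := ec_add_line c1 c2 E.
  exact: ec_add_of_line.
move: E; rewrite /ec_add; case: eqP => // <-; case: eqP => // /addr0_eq y2E _.
by rewrite -y2E.
Qed.

Lemma ec_mul_order_neg n i P : ec_nonsingular a b -> on_curve a b P ->
  mul n P = None -> (i <= n)%N -> mul (n - i) P = ec_neg (mul i P).
Proof.
move=> ns cP nP; elim: i => [|i IH] lt_i_n; first by rewrite subn0 nP.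
have stepE := ec_mulS (n - i.+1) P.
rewrite subnSK // IH in stepE; last exact: ltnW.
transitivity (add (ec_neg P) (ec_neg (mul i P))).
  by rewrite stepE (ec_addKr ns cP (on_curve_ec_mul _ cP)).
by rewrite ec_mulS ec_negD.
Qed.
End WeierstrassCurve.

Definition ec_map {K L : fieldType} (f : K -> L) (P : ec_point K) : ec_point L :=
  if P is Some (x, y) then Some (f x, f y) else None.

Section FieldMorphism.
Context {K L : fieldType} (f : {rmorphism K -> L}) {a b : K}.

Lemma ec_map_add P R :
  ec_map f (ec_add a b P R) = ec_add (f a) (f b) (ec_map f P) (ec_map f R).
Proof.
case: P R => [[x1 y1]|] [[x2 y2]|] //; rewrite /ec_add /= fmorph_eq -rmorphD fmorph_eq0.
case: eqP => _; [case: eqP => _ |] => //; congr (Some (_, _));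
  by rewrite !(fmorph_div, rmorphXn, rmorph_nat, rmorphB, rmorphN, rmorphD, rmorphM).
Qed.

Lemma ec_map_mul n P : ec_map f (ec_mul a b n P) = ec_mul (f a) (f b) n (ec_map f P).
Proof. by elim: n => //= n IH; rewrite ec_map_add IH. Qed.

Lemma infinite_order_map P :
  infinite_order (f a) (f b) (ec_map f P) <-> infinite_order a b P.
Proof.
split=> io n /io; first by rewrite -ec_map_mul; apply: contra_not => ->.
by rewrite -ec_map_mul; case: (ec_mul a b n P) => [[x y]|] // _ [].
Qed.
End FieldMorphism.

Lemma infinite_order_Q_map {K L : fieldType} (f : {rmorphism K -> L}) t :
  infinite_order (f t) (- f t ^+ 3) (Some (- f t, f t ^+ 2)) <->
  infinite_order t (- t ^+ 3) (Some (- t, t ^+ 2)).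
Proof.
have := infinite_order_map f (a := t) (b := - t ^+ 3) (Some (- t, t ^+ 2)).
by rewrite /= !rmorphN !rmorphXn.
Qed.

Lemma on_curve_Q {K : fieldType} (t : K) : on_curve t (- t ^+ 3) (Some (- t, t ^+ 2)).
Proof. by rewrite /=; ring. Qed.

Section Descent.
Context {K : fieldType} (u : K).
Let t := u * (1 + u).
Hypothesis two_neq0 : (2 : K) != 0.
Hypotheses (nsq_1u : ~ square (1 + u)) (nsq_N1u : ~ square (- (1 + u)))
  (nsq_Nu : ~ square (- u)) (nsq_t : ~ square t) (nsq_Nt : ~ square (- t)).

Let e1 := t * u.
Let e2 := - (t * (1 + u)).
Local Notation cubic := (ec_cubic t (- t ^+ 3)).
Local Notation R n := (ec_mul t (- t ^+ 3) n (Some (- t, t ^+ 2))).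

Let u_neq0 : u != 0. Proof. by rewrite -oppr_eq0; apply: nonsquare_neq0. Qed.
Let u1_neq0 : 1 + u != 0. Proof. exact: nonsquare_neq0. Qed.
Let t_neq0 : t != 0. Proof. exact: mulf_neq0. Qed.

Let cubic_root z : cubic z = 0 -> [\/ z = 0, z = e1 | z = e2].
Proof.
have -> : cubic z = z * (z - e1) * (z - e2) by rewrite /ec_cubic /e1 /e2 /t; ring.
move/eqP; rewrite !mulf_eq0 !subr_eq0 -orbA.
by case/or3P=> /eqP ->; [constructor 1 | constructor 2 | constructor 3].
Qed.

Let nonsingular : ec_nonsingular t (- t ^+ 3).
Proof.
have e1_neq0 : e1 != 0 by rewrite mulf_neq0.
have e2_neq0 : e2 != 0 by rewrite oppr_eq0 mulf_neq0.
have e12_neq0 : e1 - e2 != 0.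
  have -> : e1 - e2 = t * (1 + 2 * u) by rewrite /e1 /e2; ring.
  rewrite mulf_neq0 //; apply: contra_not_neq nsq_Nt => u2_eq0; exists u.
  by apply/subr0_eq; transitivity (- u * (1 + 2 * u)); [rewrite /t; ring | rewrite u2_eq0 mulr0].
move=> z /cubic_root[] ->.
- by rewrite /ec_dcubic expr0n !mulr0 !add0r oppr_eq0 expf_neq0.
- have -> : ec_dcubic t (- t ^+ 3) e1 = e1 * (e1 - e2) by rewrite /ec_dcubic /e1 /e2 /t; ring.
  exact: mulf_neq0.
- have -> : ec_dcubic t (- t ^+ 3) e2 = e2 * - (e1 - e2) by rewrite /ec_dcubic /e1 /e2 /t; ring.
  by rewrite mulf_neq0 // oppr_eq0.
Qed.

Let off_axis n := if R n is Some (_, y) then y != 0 else false.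

Let descent_invariant {e m} : cubic e = 0 -> (forall n, (0 < n < m)%N -> off_axis n) ->
  forall n x y, (0 < n <= m)%N -> R n = Some (x, y) -> square ((x - e) * (- t - e) ^+ n).
Proof.
move=> e0 reg; elim=> // n IH x y /andP [_ le_n1_m].
have [-> | n_gt0] := posnP n.
  by rewrite ec_mul1 => -[<- _]; exists (- t - e).
rewrite ec_mulS; have := reg n; rewrite /off_axis n_gt0 le_n1_m.
case Rn: (R n) => [[x' y']|] /(_ isT) // y'_neq0 Rn1.
have cRn : y' ^+ 2 = cubic x'.
  by have := on_curve_ec_mul two_neq0 n (on_curve_Q t); rewrite Rn.
have x'e : x' - e != 0.
  by apply: contra_neq y'_neq0 => /subr0_eq x'E; apply/eqP; rewrite -sqrf_eq0 cRn x'E e0.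
have sq_n := IH x' y' (introT andP (conj n_gt0 (ltnW le_n1_m))) Rn.
have sq_step := ec_add_descent two_neq0 e e0 (on_curve_Q t) cRn Rn1.
have -> : (x - e) * (- t - e) ^+ n.+1 = (- t - e) ^+ n * ((- t - e) * (x - e)).
  by rewrite exprS; ring.
apply: (square_trans x'e); first by rewrite mulrC.
by rewrite mulrCA mulrA.
Qed.

Let root0 : cubic 0 = 0. Proof. by rewrite /ec_cubic; ring. Qed.
Let root1 : cubic e1 = 0. Proof. by rewrite /ec_cubic /e1 /t; ring. Qed.
Let shift0_neq0 : - t - 0 != 0. Proof. by rewrite subr0 oppr_eq0. Qed.
Let shift1_neq0 : - t - e1 != 0.
Proof.
have -> : - t - e1 = - (t * (1 + u)) by rewrite /e1; ring.
by rewrite oppr_eq0 mulf_neq0.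
Qed.

Let no_two_torsion {m x} : (0 < m)%N -> (forall n, (0 < n < m)%N -> off_axis n) ->
  R m <> Some (x, 0).
Proof.
move=> m_gt0 reg Rm.
have x_root : cubic x = 0.
  by have := on_curve_ec_mul two_neq0 m (on_curve_Q t); rewrite Rm /= expr0n => /esym.
have class e : cubic e = 0 -> - t - e != 0 -> square ((x - e) * (- t - e) ^+ odd m).
  move=> e0 te; apply: square_odd te _.
  by apply: (descent_invariant e0 reg _ _ _ _ Rm); rewrite m_gt0 leqnn.
move: class; case/cubic_root: x_root => -> class.
- have := class e1 root1 shift1_neq0; case: (odd m) => /=.
    by apply: (nonsquare_scale nsq_t t_neq0); rewrite /e1 /t; ring.
  by apply: (nonsquare_scale nsq_N1u u_neq0); rewrite /e1 /t; ring.
- have := class 0 root0 shift0_neq0; case: (odd m) => /=.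
    by apply: (nonsquare_scale nsq_Nu t_neq0); rewrite /e1 /t; ring.
  by apply: (nonsquare_scale nsq_1u u_neq0); rewrite /e1 /t; ring.
- have := class 0 root0 shift0_neq0; case: (odd m) => /=.
    by apply: (nonsquare_scale nsq_1u t_neq0); rewrite /e2 /t; ring.
  by apply: (nonsquare_scale nsq_Nu u1_neq0); rewrite /e2 /t; ring.
Qed.

Let no_zero {m} : (0 < m)%N -> (forall n, (0 < n < m)%N -> off_axis n) -> R m <> None.
Proof.
case: m => [|[|k]] // _ reg Rm.
move: (reg k.+1 (ltnSn _)); rewrite /off_axis; case Rk: (R k.+1) => [[x y]|] // y_neq0.
have xE : - t = x by move: Rm; rewrite ec_mulS Rk /ec_add; case: eqP.
case/boolP: (odd k) => [k_odd | k_even].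
  have := descent_invariant root0 reg k.+1 x y (ltnW (ltnSn _)) Rk.
  move/(square_odd shift0_neq0); rewrite /= k_odd /= expr0 mulr1 subr0 -xE.
  exact: nsq_Nt.
pose j := k./2.+1.
have jjE : (j + j)%N = k.+2.
  by rewrite addnn doubleS -[X in _ = X.+2](odd_double_half k) (negPf k_even).
have j_gt0 : (0 < j)%N by [].
have j_le_m : (j <= k.+2)%N by lia.
have j_lt_m : (0 < j < k.+2)%N by lia.
have := ec_mul_order_neg two_neq0 _ j _ nonsingular (on_curve_Q t) Rm j_le_m.
rewrite (_ : k.+2 - j = j)%N; last by lia.
move: (reg j j_lt_m); rewrite /off_axis; case: (R j) => [[x' y']|] // y'_neq0 [y'E].
move: y'_neq0.
have /eqP : y' * 2 = 0 by rewrite mulr_natr mulr2n {1}y'E addNr.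
by rewrite mulf_eq0 (negPf two_neq0) orbF => ->.
Qed.

Lemma infinite_order_descent : infinite_order t (- t ^+ 3) (Some (- t, t ^+ 2)).
Proof.
move=> N N_gt0 RN.
have ex_bad : exists m, (0 < m)%N && ~~ off_axis m by exists N; rewrite N_gt0 /off_axis RN.
case: (ex_minnP ex_bad) => m /andP [m_gt0 not_off] m_min.
have reg n : (0 < n < m)%N -> off_axis n.
  case/andP => n_gt0; apply: contraTT => not_off_n.
  by rewrite -leqNgt m_min // n_gt0.
move: not_off; rewrite /off_axis; case Rm: (R m) => [[x y]|]; last first.
  by move=> _; exact: no_zero m_gt0 reg Rm.
by rewrite negbK => /eqP y0; apply: (no_two_torsion m_gt0 reg); rewrite Rm y0.
Qed.
End Descent.

Section FractionFieldLift.
Local Open Scope quotient_scope.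
Context {R : idomainType} {L : fieldType} (f : {rmorphism R -> L}).
Hypothesis f_inj : injective f.

Lemma tofrac_numden (x : {fraction R}) : x = (\n_(repr x))%:F / (\d_(repr x))%:F.
Proof.
have pi_mul_denom (r : {ratio R}) : \pi_{fraction R} r * (\d_r)%:F = (\n_r)%:F.
  unlock FracField.tofrac; rewrite -[_ * _]FracField.pi_mul; apply/eqmodP.
  rewrite /= FracField.equivfE /FracField.mulf !numden_Ratio ?mulf_neq0 ?oner_neq0 ?denom_ratioP //.
  by rewrite !mulr1 mulrC.
by rewrite -pi_mul_denom reprK mulfK // tofrac_eq0 denom_ratioP.
Qed.

Lemma fracP (x : {fraction R}) : exists n d, d != 0 /\ x = n%:F / d%:F.
Proof.
by exists (\n_(repr x)), (\d_(repr x)); split; [apply: denom_ratioP | apply: tofrac_numden].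
Qed.

Definition frac_lift (x : {fraction R}) : L := f \n_(repr x) / f \d_(repr x).

Let f_neq0 r : r != 0 -> f r != 0.
Proof. by rewrite -(rmorph0 f) (inj_eq f_inj). Qed.

Lemma frac_lift_div n d : d != 0 -> frac_lift (n%:F / d%:F) = f n / f d.
Proof.
move=> d_neq0; rewrite /frac_lift; set x := n%:F / d%:F.
have d'_neq0 := denom_ratioP (repr x).
have cross : n * \d_(repr x) = \n_(repr x) * d.
  apply/eqP; rewrite -tofrac_eq !tofracM; apply/eqP.
  have nE : n%:F = x * d%:F by rewrite divfK ?tofrac_eq0.
  have n'E : (\n_(repr x))%:F = x * (\d_(repr x))%:F.
    by rewrite {2}[x]tofrac_numden divfK ?tofrac_eq0.
  by rewrite nE n'E mulrAC.
apply/eqP; rewrite eqr_div ?f_neq0 // -!rmorphM.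
by rewrite cross.
Qed.

Lemma frac_lift_tofrac r : frac_lift r%:F = f r.
Proof. by rewrite -[r%:F]divr1 -tofrac1 frac_lift_div ?oner_neq0 // rmorph1 divr1. Qed.

Lemma frac_lift_is_nmod_morphism : nmod_morphism frac_lift.
Proof.
split=> [|x y]; first by rewrite -tofrac0 frac_lift_tofrac rmorph0.
have [n1 [d1 [d1_neq0 ->]]] := fracP x; have [n2 [d2 [d2_neq0 ->]]] := fracP y.
rewrite addf_div ?tofrac_eq0 // -!tofracM -tofracD !frac_lift_div ?mulf_neq0 //.
by rewrite addf_div ?f_neq0 // rmorphD !rmorphM.
Qed.

Lemma frac_lift_is_monoid_morphism : monoid_morphism frac_lift.
Proof.
split=> [|x y]; first by rewrite -tofrac1 frac_lift_tofrac rmorph1.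
have [n1 [d1 [d1_neq0 ->]]] := fracP x; have [n2 [d2 [d2_neq0 ->]]] := fracP y.
by rewrite mulf_div -!tofracM !frac_lift_div ?mulf_neq0 // !rmorphM mulf_div.
Qed.

Lemma frac_lift_rmorphism : exists g : {rmorphism {fraction R} -> L}, forall r, g r%:F = f r.
Proof.
pose g : {rmorphism {fraction R} -> L} := HB.pack frac_lift
  (GRing.isNmodMorphism.Build _ _ _ frac_lift_is_nmod_morphism)
  (GRing.isMonoidMorphism.Build _ _ _ frac_lift_is_monoid_morphism).
by exists g; apply: frac_lift_tofrac.
Qed.
End FractionFieldLift.

Section PrimeFieldEmbedding.
Context {p : nat} {L : fieldType}.
Hypothesis pcharL : p \in [pchar L].

Lemma Fp_to_natr n : Fp_to L (n%:R : 'F_p) = n%:R.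
Proof. by rewrite /Fp_to (val_Fp_nat (pcharf_prime pcharL)) (GRing.natr_mod_pchar pcharL). Qed.

Lemma Fp_to_is_nmod_morphism : nmod_morphism (@Fp_to p L).
Proof.
split=> [|a b]; first by [].
by rewrite -[a]natr_Zp -[b]natr_Zp -natrD !Fp_to_natr natrD.
Qed.

Lemma Fp_to_is_monoid_morphism : monoid_morphism (@Fp_to p L).
Proof.
split=> [|a b]; first exact: (Fp_to_natr 1).
by rewrite -[a]natr_Zp -[b]natr_Zp -natrM !Fp_to_natr natrM.
Qed.

Lemma transcendental_Fp_rmorphism t : transcendental_Fp p t ->
  exists g : {rmorphism FpT p -> L}, g (varT p) = t.
Proof.
move=> t_tr.
pose fp : {rmorphism 'F_p -> L} := HB.pack (@Fp_to p L)
  (GRing.isNmodMorphism.Build _ _ _ Fp_to_is_nmod_morphism)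
  (GRing.isMonoidMorphism.Build _ _ _ Fp_to_is_monoid_morphism).
have fp_t : commr_rmorph fp t by move=> c; apply: mulrC.
have ev_inj : injective (horner_morph fp_t).
  by apply: raddf_inj => q; apply: contra_eq; apply: t_tr.
have [g gE] := frac_lift_rmorphism _ ev_inj.
by exists g; rewrite /varT gE; apply: horner_morphX.
Qed.
End PrimeFieldEmbedding.

Lemma two_neq0_pchar {R : nzRingType} p : p \in [pchar R] -> p != 2%N -> (2 : R) != 0.
Proof.
move=> pcharR p_neq2; rewrite -(dvdn_pcharf pcharR) dvdn_prime2 //.
exact: pcharf_prime pcharR.
Qed.

Lemma tofrac_nonsquare {F : fieldType} (c : F) (h : {poly F}) :
  ~~ root h c -> ~ square (('X - c%:P) * h)%:F.
Proof.
move=> hc [w]; have [n [d [d_neq0 ->]]] := fracP w.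
set g := ('X - c%:P) * h.
have X_neq0 : 'X - c%:P != 0 by rewrite polyXsubC_eq0.
have h_neq0 : h != 0 by apply: contraNneq hc => ->; rewrite root0.
have g_neq0 : g != 0 by rewrite mulf_neq0.
rewrite expr_div_n -!tofracXn => /(congr1 ( *%R^~ (d ^+ 2)%:F)).
rewrite divfK ?tofrac_eq0 ?expf_neq0 // -tofracM => /eqP; rewrite tofrac_eq => /eqP gdn.
have n_neq0 : n != 0.
  by apply: contra_neq (mulf_neq0 g_neq0 (expf_neq0 2 d_neq0)) => n0; rewrite gdn n0 expr0n.
move/(congr1 (odd \o mup c)): gdn => /=.
rewrite !expr2 !mupM ?mulf_neq0 // (mupNroot hc) -[X in mup c X]expr1 mup_XsubCX eqxx.
by rewrite addn0 !addnn /= !odd_double.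
Qed.

Section RationalFunctionField.
Variable p : nat.
Hypotheses (p_prime : prime p) (p_neq2 : p != 2%N).
Local Notation T := (varT p).

Let pchar_FpT : p \in [pchar FpT p].
Proof. exact: (rmorph_pchar (@FracField.tofrac _) (rmorph_pchar polyC (pchar_Fp p_prime))). Qed.

Let nonsquare_FpT (c : 'F_p) (h : {poly 'F_p}) (x : FpT p) :
  ~~ root h c -> x = (('X - c%:P) * h)%:F -> ~ square x.
Proof. by move=> hc ->; apply: tofrac_nonsquare. Qed.

Let square_add_rmorphism : exists sigma : {rmorphism FpT p -> FpT p}, sigma T = T ^+ 2 + T.
Proof.
pose r : {poly 'F_p} := 'X ^+ 2 + 'X.
have r_size : (1 < size r)%N by rewrite size_addl ?size_polyXn ?size_polyX.
have comp_inj : injective (@FracField.tofrac _ \o comp_poly r).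
  by apply: raddf_inj => q /eqP; rewrite /= tofrac_eq0 comp_poly_eq0 // => /eqP.
have [sigma sigmaE] := frac_lift_rmorphism _ comp_inj.
by exists sigma; rewrite /varT sigmaE /= comp_polyX rmorphD rmorphXn.
Qed.

Lemma infinite_order_FpT : infinite_order T (- T ^+ 3) (Some (- T, T ^+ 2)).
Proof.
have [sigma sigmaT] := square_add_rmorphism.
apply/(infinite_order_Q_map sigma); rewrite sigmaT (_ : T ^+ 2 + T = T * (1 + T)); last by ring.
apply: infinite_order_descent; [exact: two_neq0_pchar pchar_FpT p_neq2
  | apply: (nonsquare_FpT (-1) 1) | apply: (nonsquare_FpT (-1) (-1))
  | apply: (nonsquare_FpT 0 (-1)) | apply: (nonsquare_FpT 0 ('X + 1))
  | apply: (nonsquare_FpT 0 (- ('X + 1)))].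
all: by [rewrite rootE !hornerE ?oppr_eq0 ?oner_eq0
  | rewrite /varT !(rmorphB, rmorphM, rmorphN, rmorphD, rmorph1, rmorph0); ring].
Qed.
End RationalFunctionField.

Theorem corollary2p6 (p : nat) (hp : prime p) (hp2 : p != 2%N) :
  (on_curve (varT p) (- varT p ^+ 3) (Some (- varT p, varT p ^+ 2)) /\
   infinite_order (varT p) (- varT p ^+ 3) (Some (- varT p, varT p ^+ 2)))
  /\
  (forall (L : fieldType) (t : L), p \in [pchar L] -> transcendental_Fp p t ->
     on_curve t (- t ^+ 3) (Some (- t, t ^+ 2)) /\
     infinite_order t (- t ^+ 3) (Some (- t, t ^+ 2))).
Proof.
have io_T := infinite_order_FpT p hp hp2.
split; first by split; [exact: on_curve_Q | exact: io_T].
move=> L t pcharL /(transcendental_Fp_rmorphism pcharL) [f <-].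
by split; [exact: on_curve_Q | apply/infinite_order_Q_map].
Qed.
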